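(* The system $(X,\hat T)$ has zero topological entropy.
   Context: Let $\tau:\mathbb N\to(0,\infty)$ be non-increasing with $\tau(n)\to0$. Fix integers $2\le q_1<q_2<\cdots$ such that for every $k\ge1$: (i) $q_{k+1}>q_k^4+3q_k$; (ii) $\tau(\lceil q_{k+1}/3\rceil)<\frac1{16q_k}$. For $k\ge1$ put $q^{(0)}_k=q_{2k}$, $q^{(1)}_k=q_{2k+1}$, $q^{(2)}_k=q^{(0)}_k-1$, $q^{(3)}_k=q^{(1)}_k-1$, and $L^{(i)}_k=\lfloor q^{(i)}_{k+1}/(3q^{(i)}_k)\rfloor$. Let $s^{(i)}_k\in\{-1,0,1\}^{\mathbb N}$ (indices $n\ge1$) be given by $s^{(i)}_k(n)=1$ if $n=jq^{(i)}_k$ with $1\le j\le L^{(i)}_k$, $s^{(i)}_k(n)=-1$ if $n=jq^{(i)}_k$ with $L^{(i)}_k<j\le2L^{(i)}_k$, and $s^{(i)}_k(n)=0$ otherwise. For $w\in\{-1,0,1\}^{\mathbb N}$ and $p\in\mathbb N_0$ let $\sigma^{-p}w$ be defined by $(\sigma^{-p}w)(n)=0$ for $1\le n\le p$ and $(\sigma^{-p}w)(n)=w(n-p)$ for $n>p$. For $l\le m$ write $w|_l^m=(w_l,\dots,w_m)$. Let $R^{(i)}_k=\{(\sigma^{-p}s^{(i)}_k)|_{q^{(i)}_k}^{q^{(i)}_{k+1}-1}:p=0,1,\dots,q^{(i)}_k\}$ and $P^{(i)}=\{y\in\{-1,0,1\}^{\mathbb N}: y(n)=0\text{ for }1\le n<q^{(i)}_1,\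 y|_{q^{(i)}_k}^{q^{(i)}_{k+1}-1}\in R^{(i)}_k\text{ for all }k\ge1\}$. Let $Z=\{-1,0,1\}^{\mathbb N}\times\{-1,0,1\}^{\mathbb Z}$, where each factor carries the metric $d(u,v)=3^{-\min\{|m|:u_m\neq v_m\}}$ and $Z$ the maximum of the two. $\sigma$ is the left shift $(\sigma u)_m=u_{m+1}$ (invertible on $\{-1,0,1\}^{\mathbb Z}$). Define $T:Z\to Z$, $T(y,z)=(\sigma y,\sigma^{y_1}z)$, and $X_i=\overline{\bigcup_{n\ge0}T^n(P^{(i)}\times\{-1,0,1\}^{\mathbb Z})}$ for $i\in\{0,1,2,3\}$. Let $X=X_0\times X_1\times X_2\times X_3\times\{0,1,2,3\}$ with $\hat T(p^{(0)},p^{(1)},p^{(2)},p^{(3)},i)=(Tp^{(0)},Tp^{(1)},Tp^{(2)},Tp^{(3)},i)$. *)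

From Stdlib Require Import Reals Lra Lia ZArith Arith List.
From Coquelicot Require Import Coquelicot.
Open Scope R_scope.

(* Encoding conventions.
   * A one-sided sequence u in {-1,0,1}^N (indices n >= 1) is encoded as
     u : nat -> Z with  u k  standing for  u_(k+1).  Helper [yat u n] = u_n.
   * A two-sided sequence z in {-1,0,1}^Z is z : Z -> Z.
   * Auxiliary words (s_k^(i), sigma^{-p} w) are functions nat -> Z used
     only at indices n >= 1 (value at 0 irrelevant).                      *)

Definition seqN := nat -> Z.
Definition seqZ := Z -> Z.
Definition Pt := (seqN * seqZ)%type.

Definition yat (u : seqN) (n : nat) : Z := u (n - 1)%nat.

Definition sym (a : Z) : Prop := a = (-1)%Z \/ a = 0%Z \/ a = 1%Z.

Definition inSpace (p : Pt) : Prop :=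
  (forall k, sym (fst p k)) /\ (forall m, sym (snd p m)).

(* metric d(u,v) = 3^{-min{|m| : u_m <> v_m}} (0 if u = v); the min is the
   sup of the set {3^{-|m|} : u_m <> v_m}; [real] of the empty sup is 0. *)
Definition dN (u v : seqN) : R :=
  real (Lub_Rbar (fun r => exists k : nat, u k <> v k /\ r = (/ 3) ^ (S k))).
Definition dZ (u v : seqZ) : R :=
  real (Lub_Rbar (fun r => exists m : Z, u m <> v m /\ r = (/ 3) ^ (Z.abs_nat m))).
Definition dPt (p p' : Pt) : R := Rmax (dN (fst p) (fst p')) (dZ (snd p) (snd p')).

(* T(y,z) = (sigma y, sigma^{y_1} z), (sigma^a z)_m = z_(m+a). *)
Definition Tmap (p : Pt) : Pt :=
  (fun k => fst p (S k), fun m => snd p (m + fst p 0%nat)%Z).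

Definition qi (q : nat -> nat) (i k : nat) : nat :=
  match i with
  | 0 => q (2 * k)%nat
  | 1 => q (2 * k + 1)%nat
  | 2 => (q (2 * k)%nat - 1)%nat
  | _ => (q (2 * k + 1)%nat - 1)%nat
  end.

Definition Li (q : nat -> nat) (i k : nat) : nat :=
  (qi q i (k + 1) / (3 * qi q i k))%nat.

Definition sword (qk L : nat) (n : nat) : Z :=
  if Nat.eqb (n mod qk) 0 then
    let j := (n / qk)%nat in
    if andb (Nat.leb 1 j) (Nat.leb j L) then 1%Z
    else if andb (Nat.ltb L j) (Nat.leb j (2 * L)) then (-1)%Z
    else 0%Z
  else 0%Z.

Definition shiftR (p : nat) (w : nat -> Z) (n : nat) : Z :=
  if Nat.leb n p then 0%Z else w (n - p)%nat.

Definition inR (q : nat -> nat) (i k : nat) (y : seqN) : Prop :=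
  exists p : nat, (p <= qi q i k)%nat /\
    forall n : nat, (qi q i k <= n <= qi q i (k + 1) - 1)%nat ->
      yat y n = shiftR p (sword (qi q i k) (Li q i k)) n.

Definition Pset (q : nat -> nat) (i : nat) (y : seqN) : Prop :=
  (forall k, sym (y k)) /\
  (forall n : nat, (1 <= n < qi q i 1)%nat -> yat y n = 0%Z) /\
  (forall k : nat, (1 <= k)%nat -> inR q i k y).

(* X_i = closure in Z of the union of T^n(P^(i) x {-1,0,1}^Z) *)
Definition Xi (q : nat -> nat) (i : nat) (x : Pt) : Prop :=
  inSpace x /\
  forall eps : R, 0 < eps ->
    exists (p : Pt) (n : nat),
      Pset q i (fst p) /\ (forall m, sym (snd p m)) /\
      dPt x (Nat.iter n Tmap p) < eps.

Definition St := (Pt * Pt * Pt * Pt * nat)%type.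

Definition Xset (q : nat -> nat) (s : St) : Prop :=
  match s with
  | (p0, p1, p2, p3, i) =>
      Xi q 0 p0 /\ Xi q 1 p1 /\ Xi q 2 p2 /\ Xi q 3 p3 /\ (i < 4)%nat
  end.

Definition That (s : St) : St :=
  match s with
  | (p0, p1, p2, p3, i) => (Tmap p0, Tmap p1, Tmap p2, Tmap p3, i)
  end.

Definition dSt (s s' : St) : R :=
  match s, s' with
  | (p0, p1, p2, p3, i), (p0', p1', p2', p3', i') =>
      Rmax (Rmax (Rmax (dPt p0 p0') (dPt p1 p1')) (Rmax (dPt p2 p2') (dPt p3 p3')))
           (if Nat.eqb i i' then 0 else 1)
  end.

(* For a map T on a metric space (S,d) and an invariant set X:
   E is (n,eps)-separated if for x <> y in E, max_{0<=j<n} d(T^j x,T^j y) > eps;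
   s(n,eps) = sup of #E over finite (n,eps)-separated E subset X;
   h(T) = lim_{eps->0} limsup_n (1/n) log s(n,eps).
   Since s(n,eps) >= 1 when X is nonempty and the limsup is monotone in eps,
   h(T) = 0 holds iff for every eps>0 and delta>0, for all large n every
   finite (n,eps)-separated subset of X has at most exp(delta n) points.
   [zero_topological_entropy] is this literal unfolding of h(T) = 0. *)
Definition separated {S : Type} (d : S -> S -> R) (T : S -> S)
    (n : nat) (eps : R) (x y : S) : Prop :=
  exists j : nat, (j < n)%nat /\ d (Nat.iter j T x) (Nat.iter j T y) > eps.

Definition separated_set {S : Type} (X : S -> Prop) (d : S -> S -> R) (T : S -> S)
    (n : nat) (eps : R) (E : list S) : Prop :=
  NoDup E /\ (forall x, In x E -> X x) /\
  (forall x y, In x E -> In y E -> x <> y -> separated d T n eps x y).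

Definition zero_topological_entropy {S : Type} (X : S -> Prop)
    (d : S -> S -> R) (T : S -> S) : Prop :=
  forall eps delta : R, 0 < eps -> 0 < delta ->
    exists N : nat, forall n : nat, (N <= n)%nat ->
      forall E : list S, separated_set X d T n eps E ->
        INR (length E) <= exp (delta * INR n).

(* The first coordinate of a point of [X_i] is, on any finite window, a window of
   a sequence of [P^(i)].  Since the scales [q_k] at least double, a window of
   length [N] meets only [O (log N)] blocks, and on each of them it is a signed
   arithmetic progression described by five numbers [<= N]: there are
   [N ^ O (log N)] such windows.  On each block the cocycle [sum_(k < j) y_k]
   driving the second coordinate is a tent of height [L_k] and slope one per
   period [q_k]; hence over [n] steps it moves by at most
   [max (max_(k < K) L_k, n / q_K + 1) <= n / D] once [n] is large, and the
   first [n] iterates only read [O (n / D)] letters of the second coordinate.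
   So an [(n, eps)]-separated set has at most [exp (O (log^2 n) + O (n / D))]
   points for every [D]. *)

From Stdlib Require Import Reals Arith ZArith.
Open Scope R_scope.
From Stdlib Require Import Lia Lra List Classical.
From Coquelicot Require Import Coquelicot.
Import ListNotations.

Set Default Proof Using "All".

Ltac bool_cases := repeat match goal with
  | |- context [(?a <=? ?b)%Z] => destruct (Z.leb_spec a b)
  | |- context [(?a <? ?b)%Z] => destruct (Z.ltb_spec a b)
  | |- context [(?a <=? ?b)%nat] => destruct (Nat.leb_spec a b)
  | |- context [(?a <? ?b)%nat] => destruct (Nat.ltb_spec a b)
  | |- context [(?a =? ?b)%nat] => destruct (Nat.eqb_spec a b)
  | |- context [(?a && ?b)%bool] => progress cbn [andb]
  end.

Lemma third_pow_pos (n : nat) : 0 < (/ 3) ^ n.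
Proof. apply pow_lt; lra. Qed.

Lemma third_pow_antitone (m n : nat) : (n <= m)%nat -> (/ 3) ^ m <= (/ 3) ^ n.
Proof.
  intros Hnm. replace m with (n + (m - n))%nat by lia. rewrite pow_add.
  assert (0 <= (/ 3) ^ (m - n) <= 1).
  { split; [apply pow_le; lra|].
    destruct (m - n)%nat; [simpl; lra|left; apply pow_lt_1_compat; [lra|lia]]. }
  pose proof (third_pow_pos n). nra.
Qed.

Lemma real_Lub_le (E : R -> Prop) (b : R) :
  0 <= b -> (forall r, E r -> r <= b) -> real (Lub_Rbar E) <= b.
Proof.
  intros Hb HE. destruct (Lub_Rbar_correct E) as [_ Hleast].
  assert (Rbar_le (Lub_Rbar E) b) by (apply Hleast; intros x Hx; now apply HE).
  destruct (Lub_Rbar E); simpl in *; tauto || lra.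
Qed.

Lemma le_real_Lub (E : R -> Prop) (b r : R) :
  (forall r, E r -> r <= b) -> E r -> r <= real (Lub_Rbar E).
Proof.
  intros HE Hr. destruct (Lub_Rbar_correct E) as [Hub Hleast].
  assert (Rbar_le (Lub_Rbar E) b) by (apply Hleast; intros x Hx; now apply HE).
  specialize (Hub r Hr). destruct (Lub_Rbar E); simpl in *; tauto || lra.
Qed.

Lemma dN_le_agree (u v : seqN) (M : nat) :
  (forall k, (k < M)%nat -> u k = v k) -> dN u v <= (/ 3) ^ S M.
Proof.
  intros Huv. apply real_Lub_le; [left; apply third_pow_pos|].
  intros r [k [Hk ->]]. apply third_pow_antitone.
  destruct (Nat.lt_ge_cases k M); [exfalso; auto|lia].
Qed.

Lemma dZ_le_agree (u v : seqZ) (M : nat) :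
  (forall m, (Z.abs_nat m <= M)%nat -> u m = v m) -> dZ u v <= (/ 3) ^ S M.
Proof.
  intros Huv. apply real_Lub_le; [left; apply third_pow_pos|].
  intros r [m [Hm ->]]. apply third_pow_antitone.
  destruct (Nat.le_gt_cases (Z.abs_nat m) M); [exfalso; auto|lia].
Qed.

Lemma dN_lt_agree (u v : seqN) (N : nat) :
  dN u v < (/ 3) ^ N -> forall k, (k < N)%nat -> u k = v k.
Proof.
  intros Hd k Hk. destruct (Z.eq_dec (u k) (v k)) as [|Hne]; auto.
  assert ((/ 3) ^ S k <= dN u v).
  { apply le_real_Lub with (b := 1); [|now exists k].
    intros r [k' [_ ->]]. left. apply pow_lt_1_compat; [lra|lia]. }
  pose proof (third_pow_antitone N (S k) Hk). lra.
Qed.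

(** * Iterates of [T] and the cocycle *)

(* [cocycle y b = y_1 + ... + y_b], the total shift applied to the second coordinate
   by the first [b] iterates. *)
Fixpoint cocycle (y : seqN) (b : nat) : Z :=
  match b with O => 0%Z | S b' => (cocycle y b' + y b')%Z end.

Lemma cocycle_S (y : seqN) (b : nat) : cocycle y (S b) = (cocycle y b + yat y (S b))%Z.
Proof. unfold yat. simpl. rewrite Nat.sub_0_r. reflexivity. Qed.

Lemma cocycle_ext (u v : seqN) (j : nat) :
  (forall k, (k < j)%nat -> u k = v k) -> cocycle u j = cocycle v j.
Proof.
  induction j as [|j IH]; intros Huv; simpl; auto.
  rewrite IH by (intros; apply Huv; lia). rewrite Huv by lia. reflexivity.
Qed.

Lemma cocycle_shift (u y : seqN) (m j : nat) :
  (forall k, (k < j)%nat -> u k = y (k + m)%nat) ->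
  cocycle u j = (cocycle y (m + j) - cocycle y m)%Z.
Proof.
  induction j as [|j IH]; intros Huy; simpl.
  - rewrite Nat.add_0_r. lia.
  - rewrite IH by (intros; apply Huy; lia). rewrite Huy by lia.
    rewrite Nat.add_succ_r. simpl. rewrite (Nat.add_comm j m). lia.
Qed.

Lemma iter_Tmap_fst (x : Pt) (j k : nat) :
  fst (Nat.iter j Tmap x) k = fst x (k + j)%nat.
Proof.
  revert k. induction j as [|j IH]; intros k; simpl; [f_equal; lia|].
  rewrite IH. f_equal; lia.
Qed.

Lemma iter_Tmap_snd (x : Pt) (j : nat) (m : Z) :
  snd (Nat.iter j Tmap x) m = snd x (m + cocycle (fst x) j)%Z.
Proof.
  revert m. induction j as [|j IH]; intros m; simpl; [f_equal; lia|].
  rewrite IH, iter_Tmap_fst. simpl. f_equal; lia.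
Qed.

Lemma iter_That (p0 p1 p2 p3 : Pt) (i j : nat) :
  Nat.iter j That (p0, p1, p2, p3, i) =
  (Nat.iter j Tmap p0, Nat.iter j Tmap p1, Nat.iter j Tmap p2, Nat.iter j Tmap p3, i).
Proof. induction j as [|j IH]; simpl; [reflexivity|]. rewrite IH. reflexivity. Qed.

(** * Coding the letters of a shifted word [shiftR p (sword q L)] *)

Section ProgressionCodes.
Open Scope bool_scope.
Open Scope nat_scope.

Definition progression_pattern (r q d1 d2 d3 s : nat) : Z :=
  if (r <=? s) && ((s - r) mod q =? 0) then
    let i := (s - r) / q in
    if (d1 <=? i) && (i <? d2) then 1%Z
    else if (d2 <=? i) && (i <? d3) then (-1)%Z else 0%Z
  else 0%Z.

Fixpoint decode (l : list nat) (s : nat) : Z :=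
  match l with
  | r :: q :: d1 :: d2 :: d3 :: l' => (progression_pattern r q d1 d2 d3 s + decode l' s)%Z
  | _ => 0%Z
  end.

Definition clamp (N : nat) (x : Z) : nat := Z.to_nat (Z.min x (Z.of_nat N)).

(* The pattern of [shiftR p (sword q L)] seen from position [a] on a window of
   length [N]; every parameter is truncated to [N], which does not change the
   window (see [decode_block_code]). *)
Definition block_code (q L p a N : nat) : list nat :=
  let r := ((Z.of_nat p - Z.of_nat a) mod Z.of_nat q)%Z in
  let d := ((Z.of_nat p - Z.of_nat a) / Z.of_nat q)%Z in
  [Nat.min (Z.to_nat r) N; Nat.min q N; clamp N (1 + d);
   clamp N (Z.of_nat L + 1 + d); clamp N (2 * Z.of_nat L + 1 + d)].

Lemma block_code_le (q L p a N : nat) : forall c, In c (block_code q L p a N) -> c <= N.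
Proof. intros c Hc. unfold block_code, clamp in Hc. simpl in Hc. intuition lia. Qed.

Lemma clamp_leb (N i : nat) (x : Z) : i < N -> (clamp N x <=? i) = (x <=? Z.of_nat i)%Z.
Proof.
  intros. apply Bool.eq_iff_eq_true. rewrite Nat.leb_le, Z.leb_le. unfold clamp. lia.
Qed.

Lemma ltb_clamp (N i : nat) (x : Z) : i < N -> (i <? clamp N x) = (Z.of_nat i <? x)%Z.
Proof.
  intros. apply Bool.eq_iff_eq_true. rewrite Nat.ltb_lt, Z.ltb_lt. unfold clamp. lia.
Qed.

Lemma mod_div_min_small (t q N : nat) : 1 <= q -> t < N ->
  (t mod Nat.min q N = 0 <-> t mod q = 0) /\ t / Nat.min q N = t / q.
Proof.
  intros Hq Ht. destruct (Nat.le_ge_cases q N).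
  - rewrite Nat.min_l by lia. tauto.
  - rewrite Nat.min_r by lia. destruct (Nat.le_gt_cases q t).
    + split; [|rewrite (Nat.div_small t N)]; lia.
    + rewrite (Nat.mod_small t q), (Nat.mod_small t N), (Nat.div_small t q),
        (Nat.div_small t N) by lia. tauto.
Qed.

Lemma shiftR_sword_Z (q L p b : nat) : 1 <= q ->
  shiftR p (sword q L) b =
  if ((Z.of_nat b - Z.of_nat p) mod Z.of_nat q =? 0)%Z then
    let j := ((Z.of_nat b - Z.of_nat p) / Z.of_nat q)%Z in
    if (1 <=? j)%Z && (j <=? Z.of_nat L)%Z then 1%Z
    else if (Z.of_nat L <? j)%Z && (j <=? 2 * Z.of_nat L)%Z then (-1)%Z else 0%Z
  else 0%Z.
Proof.
  intros Hq. unfold shiftR. destruct (Nat.leb_spec b p).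
  - assert ((Z.of_nat b - Z.of_nat p) / Z.of_nat q <= 0)%Z
      by (apply Z.div_le_upper_bound; lia).
    destruct (Z.eqb _ _); [|reflexivity].
    destruct (Z.leb_spec 1 ((Z.of_nat b - Z.of_nat p) / Z.of_nat q)); [lia|].
    destruct (Z.ltb_spec (Z.of_nat L) ((Z.of_nat b - Z.of_nat p) / Z.of_nat q));
      simpl; [lia|reflexivity].
  - unfold sword. rewrite <- Nat2Z.inj_sub, <- Nat2Z.inj_mod, <- Nat2Z.inj_div by lia.
    set (e := b - p). set (j := e / q).
    destruct (Nat.eqb_spec (e mod q) 0) as [Hm|Hm].
    + rewrite Hm. change (Z.of_nat 0) with 0%Z. rewrite Z.eqb_refl. cbv zeta.
      bool_cases; lia.
    + destruct (Z.eqb_spec (Z.of_nat (e mod q)) 0); [lia|reflexivity].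
Qed.

(* Writing [p - a = d q + r] with [0 <= r < q], the letter at [a + s] is read at
   [s - r - d q]: nonzero only for [s = r + i q], with value given by [i - d]. *)
Lemma decode_block_code (q L p a N s : nat) (l : list nat) : 1 <= q -> s < N ->
  decode (block_code q L p a N ++ l) s = (shiftR p (sword q L) (a + s) + decode l s)%Z.
Proof.
  intros Hq Hs. unfold block_code. cbn [decode app]. f_equal.
  set (r := ((Z.of_nat p - Z.of_nat a) mod Z.of_nat q)%Z).
  set (d := ((Z.of_nat p - Z.of_nat a) / Z.of_nat q)%Z).
  rewrite shiftR_sword_Z by lia.
  pose proof (Z.div_mod (Z.of_nat p - Z.of_nat a) (Z.of_nat q) ltac:(lia)) as Hdiv.
  pose proof (Z.mod_pos_bound (Z.of_nat p - Z.of_nat a) (Z.of_nat q) ltac:(lia)) as Hr.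
  fold r d in Hdiv, Hr. unfold progression_pattern.
  destruct (Nat.leb_spec (Nat.min (Z.to_nat r) N) s) as [Hrs|Hrs].
  - set (t := s - Z.to_nat r).
    assert (Ht : (Z.of_nat (a + s) - Z.of_nat p = Z.of_nat t + (- d) * Z.of_nat q)%Z)
      by (unfold t; lia).
    rewrite Ht, Z.mod_add, Z.div_add, <- Nat2Z.inj_mod, <- Nat2Z.inj_div by lia.
    replace (s - Nat.min (Z.to_nat r) N) with t by (unfold t; lia).
    destruct (mod_div_min_small t q N Hq ltac:(unfold t; lia)) as [Hmod ->].
    assert (Hi : t / q < N)
      by (pose proof (Nat.Div0.div_le_upper_bound t q t); unfold t in *; nia).
    destruct (Nat.eqb_spec (t mod Nat.min q N) 0) as [Hm|Hm];
      destruct (Z.eqb_spec (Z.of_nat (t mod q)) 0) as [Hm'|Hm']; cbn [andb]; try lia.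
    set (i := t / q) in *.
    rewrite !clamp_leb, !ltb_clamp by exact Hi.
    replace (1 + d <=? Z.of_nat i)%Z with (1 <=? Z.of_nat i + - d)%Z
      by (apply Bool.eq_iff_eq_true; rewrite !Z.leb_le; lia).
    replace (Z.of_nat i <? Z.of_nat L + 1 + d)%Z with (Z.of_nat i + - d <=? Z.of_nat L)%Z
      by (apply Bool.eq_iff_eq_true; rewrite Z.leb_le, Z.ltb_lt; lia).
    replace (Z.of_nat L + 1 + d <=? Z.of_nat i)%Z with (Z.of_nat L <? Z.of_nat i + - d)%Z
      by (apply Bool.eq_iff_eq_true; rewrite Z.leb_le, Z.ltb_lt; lia).
    replace (Z.of_nat i <? 2 * Z.of_nat L + 1 + d)%Z
      with (Z.of_nat i + - d <=? 2 * Z.of_nat L)%Z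
      by (apply Bool.eq_iff_eq_true; rewrite Z.leb_le, Z.ltb_lt; lia).
    reflexivity.
  - assert (Hne : ((Z.of_nat (a + s) - Z.of_nat p) mod Z.of_nat q <> 0)%Z).
    { intros Hz. apply Z.mod_divide in Hz as [c Hc]; [|lia].
      assert (Hsr : (Z.of_nat s - r = (c + d) * Z.of_nat q)%Z) by lia.
      destruct (Z.le_gt_cases 0 (c + d)); nia. }
    destruct (Z.eqb_spec ((Z.of_nat (a + s) - Z.of_nat p) mod Z.of_nat q) 0);
      [contradiction|reflexivity].
Qed.

End ProgressionCodes.

(** * Block sequences *)

Local Notation in_block Q k b := (Q k <= b <= Q (k + 1) - 1)%nat.

Section Blocks.
Open Scope nat_scope.

Definition block_scales (Q : nat -> nat) : Prop :=
  (forall k, 1 <= k -> 1 <= Q k) /\ (forall k, 1 <= k -> 3 * Q k + 3 <= Q (k + 1)).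

Definition block_len (Q : nat -> nat) (k : nat) : nat := Q (k + 1) / (3 * Q k).

Definition block_word (Q : nat -> nat) (p k : nat) : nat -> Z :=
  shiftR p (sword (Q k) (block_len Q k)).

(* The common shape of the sequences of [P^(i)], with [Q = qi q i]. *)
Definition block_seq (Q : nat -> nat) (y : seqN) : Prop :=
  (forall n, 1 <= n < Q 1 -> yat y n = 0%Z) /\
  (forall k, 1 <= k -> exists p, p <= Q k /\
     forall n, in_block Q k n -> yat y n = block_word Q p k n).

Fixpoint max_block_len (Q : nat -> nat) (K : nat) : nat :=
  match K with O => 0 | S K' => Nat.max (max_block_len Q K') (block_len Q K') end.

Lemma block_len_le_max (Q : nat -> nat) (K k : nat) :
  k < K -> block_len Q k <= max_block_len Q K.
Proof.
  induction K as [|K IH]; intros Hk; simpl; [lia|].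
  destruct (Nat.eq_dec k K) as [->|]; [lia|]. specialize (IH ltac:(lia)). lia.
Qed.

(* The cocycle of [shiftR p (sword q L)] after [u] completed periods. *)
Definition tent (L u : nat) : Z :=
  if u <=? L then Z.of_nat u else if u <=? 2 * L then Z.of_nat (2 * L - u) else 0%Z.

Lemma tent_bounds (L u : nat) : (0 <= tent L u <= Z.of_nat (Nat.min L u))%Z.
Proof. unfold tent. bool_cases; lia. Qed.

Lemma tent_lipschitz (L u u' : nat) : u <= u' ->
  (Z.abs (tent L u' - tent L u) <= Z.of_nat (u' - u))%Z.
Proof. intros. unfold tent. bool_cases; lia. Qed.

Lemma tent_le_dist_end (L u : nat) : (tent L u <= Z.of_nat (2 * L - u))%Z.
Proof. unfold tent. bool_cases; lia. Qed.

Lemma pred_div_mult (e q : nat) : 1 <= q -> 1 <= e -> e mod q = 0 ->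
  (e - 1) / q = e / q - 1 /\ 1 <= e / q.
Proof.
  intros Hq He Hm. pose proof (Nat.div_mod e q ltac:(lia)) as Hdiv. rewrite Hm in Hdiv.
  assert (1 <= e / q) by (destruct (e / q); lia).
  split; auto. symmetry. apply (Nat.div_unique _ _ _ (q - 1)); [lia|].
  rewrite Hdiv at 1. nia.
Qed.

Lemma pred_div_nmult (e q : nat) : 1 <= q -> e mod q <> 0 -> (e - 1) / q = e / q.
Proof.
  intros Hq Hm. pose proof (Nat.div_mod e q ltac:(lia)).
  pose proof (Nat.mod_upper_bound e q ltac:(lia)).
  symmetry. apply (Nat.div_unique _ _ _ (e mod q - 1)); lia.
Qed.

Lemma tent_step (q L p b : nat) : 1 <= q -> 1 <= b ->
  tent L ((b - p) / q) = (tent L ((b - 1 - p) / q) + shiftR p (sword q L) b)%Z.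
Proof.
  intros Hq Hb. unfold shiftR. destruct (Nat.leb_spec b p).
  - replace (b - p) with 0 by lia. replace (b - 1 - p) with 0 by lia. lia.
  - replace (b - 1 - p) with (b - p - 1) by lia. unfold sword.
    set (e := b - p). assert (He : 1 <= e) by (unfold e; lia).
    destruct (Nat.eqb_spec (e mod q) 0) as [Hm|Hm].
    + destruct (pred_div_mult e q Hq He Hm) as [-> He']. unfold tent. bool_cases; lia.
    + rewrite (pred_div_nmult e q Hq Hm). lia.
Qed.

Lemma div_add_le (x j q : nat) : 1 <= q -> (x + j) / q <= x / q + j / q + 1.
Proof.
  intros Hq. pose proof (Nat.div_mod x q ltac:(lia)). pose proof (Nat.div_mod j q ltac:(lia)).
  pose proof (Nat.mod_upper_bound x q ltac:(lia)).
  pose proof (Nat.mod_upper_bound j q ltac:(lia)).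
  assert ((x + j) / q < x / q + j / q + 2); [|lia].
  apply Nat.Div0.div_lt_upper_bound. nia.
Qed.

Lemma finite_choice (P : nat -> nat -> Prop) (m n : nat) :
  (forall k, m <= k < m + n -> exists p, P k p) ->
  exists f : nat -> nat, forall k, m <= k < m + n -> P k (f k).
Proof.
  induction n as [|n IH]; intros H; [exists (fun _ => 0); lia|].
  destruct IH as [f Hf]; [intros; apply H; lia|].
  destruct (H (m + n) ltac:(lia)) as [p Hp].
  exists (fun k => if k =? m + n then p else f k). intros k Hk.
  destruct (Nat.eqb_spec k (m + n)); [subst; auto|apply Hf; lia].
Qed.

Lemma sum_map_zero (f : nat -> Z) (ks : list nat) :
  (forall k, In k ks -> f k = 0%Z) -> fold_right Z.add 0%Z (map f ks) = 0%Z.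
Proof.
  induction ks as [|k ks IH]; intros Hz; simpl; auto.
  rewrite Hz by now left. rewrite IH by (intros; apply Hz; now right). lia.
Qed.

Lemma sum_map_single (f : nat -> Z) (ks : list nat) (k : nat) : NoDup ks -> In k ks ->
  (forall k', In k' ks -> k' <> k -> f k' = 0%Z) -> fold_right Z.add 0%Z (map f ks) = f k.
Proof.
  induction ks as [|k0 ks IH]; intros Hnd Hk Hz; [destruct Hk|].
  inversion Hnd as [|? ? Hk0 Hnd']; subst. simpl.
  destruct (Nat.eq_dec k0 k) as [->|Hne].
  - rewrite sum_map_zero; [lia|].
    intros k' Hk'. apply Hz; [now right|]. intros ->. contradiction.
  - destruct Hk as [|Hk]; [contradiction|].
    rewrite Hz by (now left || auto). rewrite IH; auto.
    intros k' Hk' Hne'. apply Hz; [now right|auto].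
Qed.

Section BlockSequences.

Variable Q : nat -> nat.
Hypothesis Q_pos : forall k, 1 <= k -> 1 <= Q k.
Hypothesis Q_growth : forall k, 1 <= k -> 3 * Q k + 3 <= Q (k + 1).

Lemma Q_mono (k k' : nat) : 1 <= k -> k <= k' -> Q k <= Q k'.
Proof.
  intros Hk Hkk. induction Hkk as [|m Hkm IH]; auto.
  pose proof (Q_growth m ltac:(lia)) as Hg. rewrite Nat.add_1_r in Hg. lia.
Qed.

Lemma Q_lt (k k' : nat) : 1 <= k -> k < k' -> Q k < Q k'.
Proof.
  intros Hk Hkk. pose proof (Q_mono (k + 1) k' ltac:(lia) ltac:(lia)).
  pose proof (Q_growth k Hk). lia.
Qed.

Lemma Q_double (k t : nat) : 1 <= k -> 2 ^ t * Q k <= Q (k + t).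
Proof.
  intros Hk. induction t as [|t IH]; [rewrite Nat.add_0_r; simpl; lia|].
  pose proof (Q_growth (k + t) ltac:(lia)). rewrite Nat.pow_succ_r'.
  replace (k + S t) with (k + t + 1) by lia. nia.
Qed.

Lemma Q_ge_index (k : nat) : 1 <= k -> k <= Q k.
Proof.
  intros Hk. pose proof (Q_double 1 (k - 1) ltac:(lia)) as Hd.
  pose proof (Nat.pow_gt_lin_r 2 (k - 1) ltac:(lia)). pose proof (Q_pos 1 ltac:(lia)).
  replace (1 + (k - 1)) with k in Hd by lia. nia.
Qed.

(* The [2 L] periods of block [k] end before block [k + 1] starts. *)
Lemma block_room (k : nat) : 1 <= k -> 2 * (block_len Q k * Q k) + Q k + 1 <= Q (k + 1).
Proof.
  intros Hk. pose proof (Q_pos k Hk). pose proof (Q_growth k Hk). unfold block_len.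
  pose proof (Nat.Div0.mul_div_le (Q (k + 1)) (3 * Q k)). nia.
Qed.

Lemma block_word_support (p k b : nat) : 1 <= k -> p <= Q k ->
  block_word Q p k b <> 0%Z -> in_block Q k b.
Proof.
  intros Hk Hp Hne. pose proof (block_room k Hk). pose proof (Q_pos k Hk).
  unfold block_word, shiftR, sword in Hne. revert Hne.
  destruct (Nat.leb_spec b p); [congruence|].
  destruct (Nat.eqb_spec ((b - p) mod Q k) 0) as [Hm|Hm]; [|congruence].
  pose proof (Nat.div_mod (b - p) (Q k) ltac:(lia)) as Hdiv. rewrite Hm in Hdiv.
  set (j := (b - p) / Q k) in *. set (L := block_len Q k) in *.
  bool_cases; try congruence; intros _; nia.
Qed.

Lemma locate_block (b : nat) : Q 1 <= b -> exists k, 1 <= k /\ in_block Q k b.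
Proof.
  intros Hb.
  assert (Hup : forall K, b < Q (S K) -> exists k, 1 <= k /\ in_block Q k b).
  { induction K as [|K IH]; intros HK; [lia|].
    destruct (Nat.lt_ge_cases b (Q (S K))); auto.
    exists (S K). rewrite Nat.add_1_r. lia. }
  apply (Hup b). pose proof (Q_ge_index (S b) ltac:(lia)). lia.
Qed.

Lemma block_unique (k k' b : nat) : 1 <= k -> 1 <= k' ->
  in_block Q k b -> in_block Q k' b -> k = k'.
Proof.
  intros Hk Hk' Hb Hb'.
  destruct (Nat.lt_total k k') as [Hl|[Hl|Hl]]; auto.
  - pose proof (Q_mono (k + 1) k' ltac:(lia) ltac:(lia)).
    pose proof (Q_pos (k + 1) ltac:(lia)). lia.
  - pose proof (Q_mono (k' + 1) k ltac:(lia) ltac:(lia)).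
    pose proof (Q_pos (k' + 1) ltac:(lia)). lia.
Qed.

Section Cocycle.

Variable y : seqN.
Hypothesis y_blocks : block_seq Q y.

Lemma cocycle_before_blocks (b : nat) : b <= Q 1 - 1 -> cocycle y b = 0%Z.
Proof.
  induction b as [|b IH]; intros Hb; [reflexivity|].
  rewrite cocycle_S, IH, (proj1 y_blocks) by lia. reflexivity.
Qed.

Section OneBlock.

Variables k p : nat.
Hypothesis k_pos : 1 <= k.
Hypothesis p_le : p <= Q k.
Hypothesis y_block : forall n, in_block Q k n -> yat y n = block_word Q p k n.

Lemma cocycle_along_block :
  cocycle y (Q k - 1) = 0%Z -> forall d, Q k - 1 + d <= Q (k + 1) - 1 ->
  cocycle y (Q k - 1 + d) = tent (block_len Q k) ((Q k - 1 + d - p) / Q k).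
Proof.
  intros H0 d. pose proof (Q_pos k k_pos).
  induction d as [|d IH]; intros Hd.
  - rewrite Nat.add_0_r, H0, Nat.div_small by lia. reflexivity.
  - replace (Q k - 1 + S d) with (S (Q k - 1 + d)) by lia.
    rewrite cocycle_S, IH, y_block by lia. unfold block_word.
    rewrite (tent_step (Q k) (block_len Q k) p (S (Q k - 1 + d))) by lia.
    replace (S (Q k - 1 + d) - 1) with (Q k - 1 + d) by lia. reflexivity.
Qed.

Lemma cocycle_block_closes :
  cocycle y (Q k - 1) = 0%Z -> cocycle y (Q (k + 1) - 1) = 0%Z.
Proof.
  intros H0. pose proof (Q_pos k k_pos). pose proof (Q_growth k k_pos).
  pose proof (cocycle_along_block H0 (Q (k + 1) - Q k)) as Hend.
  replace (Q k - 1 + (Q (k + 1) - Q k)) with (Q (k + 1) - 1) in Hend by lia.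
  rewrite Hend by lia. pose proof (block_room k k_pos).
  assert (2 * block_len Q k <= (Q (k + 1) - 1 - p) / Q k)
    by (apply Nat.div_le_lower_bound; nia).
  unfold tent. bool_cases; lia.
Qed.

End OneBlock.

Lemma cocycle_block_start (k : nat) : 1 <= k -> cocycle y (Q k - 1) = 0%Z.
Proof.
  intros Hk. induction Hk as [|k Hk IH].
  - apply cocycle_before_blocks. lia.
  - destruct (proj2 y_blocks k Hk) as [p [Hp Hy]].
    rewrite <- Nat.add_1_r. exact (cocycle_block_closes k p Hk Hp Hy IH).
Qed.

Lemma cocycle_in_block (k p b : nat) : 1 <= k -> p <= Q k ->
  (forall n, in_block Q k n -> yat y n = block_word Q p k n) ->
  Q k - 1 <= b <= Q (k + 1) - 1 ->
  cocycle y b = tent (block_len Q k) ((b - p) / Q k).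
Proof.
  intros Hk Hp Hy Hb.
  pose proof (cocycle_along_block k p Hk Hp Hy (cocycle_block_start k Hk) (b - (Q k - 1)))
    as Hval.
  replace (Q k - 1 + (b - (Q k - 1))) with b in Hval by lia. apply Hval. lia.
Qed.

Lemma cocycle_block_value (k b : nat) : 1 <= k -> in_block Q k b ->
  exists p, p <= Q k /\ cocycle y b = tent (block_len Q k) ((b - p) / Q k).
Proof.
  intros Hk Hb. destruct (proj2 y_blocks k Hk) as [p [Hp Hy]].
  exists p. split; auto. apply cocycle_in_block; auto. lia.
Qed.

Lemma cocycle_nonneg (b : nat) : (0 <= cocycle y b)%Z.
Proof.
  destruct (Nat.lt_ge_cases b (Q 1)) as [Hb|Hb].
  - rewrite cocycle_before_blocks by lia. lia.
  - destruct (locate_block b Hb) as [k [Hk Hkb]].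
    destruct (cocycle_block_value k b Hk Hkb) as [p [_ ->]]. apply tent_bounds.
Qed.

Local Notation block_bound k j := (Z.of_nat (Nat.min (block_len Q k) (j / Q k + 1))).

Lemma cocycle_le_from_before (k a b : nat) : 1 <= k -> in_block Q k b -> a < Q k ->
  (cocycle y b <= block_bound k (b - a))%Z.
Proof.
  intros Hk Hb Ha. pose proof (Q_pos k Hk).
  destruct (cocycle_block_value k b Hk Hb) as [p [Hp ->]].
  pose proof (tent_bounds (block_len Q k) ((b - p) / Q k)).
  assert ((b - p) / Q k <= (b - a) / Q k + 1).
  { rewrite <- (Nat.div_add _ 1 (Q k)) by lia. apply Nat.Div0.div_le_mono. lia. }
  lia.
Qed.

Lemma cocycle_le_until_after (k a b : nat) : 1 <= k -> in_block Q k a -> Q (k + 1) - 1 < b ->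
  (cocycle y a <= block_bound k (b - a))%Z.
Proof.
  intros Hk Ha Hb. pose proof (Q_pos k Hk). pose proof (block_room k Hk).
  destruct (cocycle_block_value k a Hk Ha) as [p [Hp ->]].
  pose proof (tent_bounds (block_len Q k) ((a - p) / Q k)).
  pose proof (tent_le_dist_end (block_len Q k) ((a - p) / Q k)).
  set (L := block_len Q k) in *. set (u := (a - p) / Q k) in *.
  assert (2 * L - u <= (b - a) / Q k + 1); [|lia].
  destruct (Nat.le_gt_cases (2 * L) (u + 1)); [lia|].
  assert (2 * L - u - 1 <= (b - a) / Q k); [|lia].
  apply Nat.div_le_lower_bound; [lia|].
  pose proof (Nat.div_mod (a - p) (Q k) ltac:(lia)) as Hdiv.
  pose proof (Nat.mod_upper_bound (a - p) (Q k) ltac:(lia)). fold u in Hdiv. nia.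
Qed.

Lemma cocycle_diff_same_block (k a j : nat) : 1 <= k ->
  in_block Q k a -> in_block Q k (a + j) ->
  (Z.abs (cocycle y (a + j) - cocycle y a) <= block_bound k j)%Z.
Proof.
  intros Hk Ha Haj. destruct (proj2 y_blocks k Hk) as [p [Hp Hy]].
  pose proof (Q_pos k Hk).
  rewrite !(cocycle_in_block k p) by (auto; lia).
  pose proof (tent_bounds (block_len Q k) ((a + j - p) / Q k)).
  pose proof (tent_bounds (block_len Q k) ((a - p) / Q k)).
  assert (Hu : (a - p) / Q k <= (a + j - p) / Q k) by (apply Nat.Div0.div_le_mono; lia).
  pose proof (tent_lipschitz (block_len Q k) _ _ Hu).
  assert ((a + j - p) / Q k <= (a - p) / Q k + j / Q k + 1).
  { eapply Nat.le_trans; [|apply div_add_le; lia]. apply Nat.Div0.div_le_mono. lia. }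
  lia.
Qed.

(* When [a] and [a + j] lie in different blocks, both values are nonnegative and
   each is bounded through the block it lies in. *)
Lemma cocycle_diff_le_block (a j : nat) : exists k, 1 <= k /\
  (Z.abs (cocycle y (a + j) - cocycle y a) <= block_bound k j)%Z.
Proof.
  pose proof (cocycle_nonneg a). pose proof (cocycle_nonneg (a + j)).
  destruct (Nat.lt_ge_cases (a + j) (Q 1)) as [Hpre|Hpre].
  - exists 1. rewrite !cocycle_before_blocks by lia. lia.
  - destruct (locate_block (a + j) Hpre) as [k' [Hk' Hb]].
    destruct (Nat.lt_ge_cases a (Q k')) as [Ha'|Ha'].
    2: { exists k'. split; auto. apply cocycle_diff_same_block; auto. lia. }
    pose proof (cocycle_le_from_before k' a (a + j) Hk' Hb Ha') as Hafter.
    replace (a + j - a) with j in Hafter by lia.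
    destruct (Nat.lt_ge_cases a (Q 1)) as [Hapre|Hapre].
    { exists k'. rewrite (cocycle_before_blocks a) by lia. lia. }
    destruct (locate_block a Hapre) as [k [Hk Ha]].
    assert (Hkk : k < k').
    { destruct (Nat.lt_ge_cases k k') as [|Hge]; auto. pose proof (Q_mono k' k Hk' Hge). lia. }
    pose proof (Q_mono (k + 1) k' ltac:(lia) ltac:(lia)).
    pose proof (cocycle_le_until_after k a (a + j) Hk Ha ltac:(lia)) as Hbefore.
    replace (a + j - a) with j in Hbefore by lia.
    destruct (Nat.le_ge_cases (Nat.min (block_len Q k) (j / Q k + 1))
                              (Nat.min (block_len Q k') (j / Q k' + 1))).
    + exists k'. lia.
    + exists k. lia.
Qed.

Lemma cocycle_increment_le (K n a j : nat) : 1 <= K -> j <= n ->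
  (Z.abs (cocycle y (a + j) - cocycle y a) <=
   Z.of_nat (Nat.max (max_block_len Q K) (n / Q K + 1)))%Z.
Proof.
  intros HK Hj. destruct (cocycle_diff_le_block a j) as [k [Hk Hdiff]].
  enough (Nat.min (block_len Q k) (j / Q k + 1) <= Nat.max (max_block_len Q K) (n / Q K + 1))
    by lia.
  destruct (Nat.lt_ge_cases k K) as [HkK|HkK].
  - pose proof (block_len_le_max Q K k HkK). lia.
  - assert (j / Q k <= n / Q K); [|lia].
    eapply Nat.le_trans; [apply Nat.Div0.div_le_mono, Hj|].
    apply Nat.div_le_compat_l. pose proof (Q_pos K HK). pose proof (Q_mono K k HK HkK). lia.
Qed.

Lemma decode_block_codes (a N s : nat) (p : nat -> nat) (ks : list nat) :
  (forall k, In k ks -> 1 <= k) -> s < N ->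
  decode (flat_map (fun k => block_code (Q k) (block_len Q k) (p k) a N) ks) s =
  fold_right Z.add 0%Z (map (fun k => block_word Q (p k) k (a + s)) ks).
Proof.
  intros Hks Hs. induction ks as [|k ks IH]; [reflexivity|]. cbn [flat_map map fold_right].
  rewrite decode_block_code, IH; auto.
  - intros k' Hk'. apply Hks. now right.
  - apply Q_pos, Hks. now left.
Qed.

Lemma first_relevant_block (a : nat) :
  exists k0, 1 <= k0 /\ a < Q (k0 + 1) /\ (k0 = 1 \/ Q k0 <= a).
Proof.
  destruct (Nat.lt_ge_cases a (Q 1)) as [Ha|Ha].
  - exists 1. pose proof (Q_lt 1 2 ltac:(lia) ltac:(lia)). simpl. lia.
  - destruct (locate_block a Ha) as [k [Hk Hb]]. exists k. pose proof (Q_pos (k + 1)). lia.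
Qed.

(* The block lengths at least double, so a window of length [N] starting in block
   [k0] ends before block [k0 + log2 N + 2]. *)
Lemma window_code (a N : nat) : 1 <= a -> 1 <= N ->
  exists l, length l = 5 * (Nat.log2 N + 2) /\ (forall c, In c l -> c <= N) /\
    forall s, s < N -> yat y (a + s) = decode l s.
Proof.
  intros Ha HN. set (B := Nat.log2 N + 2).
  destruct (first_relevant_block a) as [k0 [Hk0 [Hak0 Hk0']]].
  destruct (finite_choice (fun k p => p <= Q k /\
     forall n, in_block Q k n -> yat y n = block_word Q p k n) k0 B) as [p Hp].
  { intros k Hk. apply (proj2 y_blocks). lia. }
  assert (Hend : a + N <= Q (k0 + B)).
  { pose proof (Q_double (k0 + 1) (Nat.log2 N + 1) ltac:(lia)) as Hd.
    replace (k0 + 1 + (Nat.log2 N + 1)) with (k0 + B) in Hd by (unfold B; lia).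
    assert (HN2 : N < 2 ^ (Nat.log2 N + 1))
      by (rewrite Nat.add_1_r; apply Nat.log2_spec; lia).
    set (X := 2 ^ (Nat.log2 N + 1)) in *. nia. }
  exists (flat_map (fun k => block_code (Q k) (block_len Q k) (p k) a N) (seq k0 B)).
  split; [|split].
  - rewrite (flat_map_constant_length (c := 5)) by reflexivity. rewrite length_seq. lia.
  - intros c Hc. apply in_flat_map in Hc as [k [_ Hc]]. exact (block_code_le _ _ _ _ _ c Hc).
  - intros s Hs. rewrite decode_block_codes by (auto; intros k Hk; apply in_seq in Hk; lia).
    assert (Hzero : forall k, In k (seq k0 B) -> ~ in_block Q k (a + s) ->
              block_word Q (p k) k (a + s) = 0%Z).
    { intros k Hk Hout. apply in_seq in Hk.
      destruct (Z.eq_dec (block_word Q (p k) k (a + s)) 0); auto.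
      exfalso. apply Hout. apply (block_word_support (p k)); [lia|apply Hp; lia|auto]. }
    destruct (Nat.lt_ge_cases (a + s) (Q 1)) as [Hpre|Hpre].
    + rewrite (proj1 y_blocks) by lia. rewrite sum_map_zero; [reflexivity|].
      intros k Hk. apply Hzero; auto. apply in_seq in Hk.
      pose proof (Q_mono 1 k ltac:(lia) ltac:(lia)). lia.
    + destruct (locate_block (a + s) Hpre) as [ka [Hka Hb]].
      assert (Hr : k0 <= ka < k0 + B).
      { split.
        - destruct Hk0' as [->|Hq]; [lia|].
          destruct (Nat.le_gt_cases k0 ka); auto.
          pose proof (Q_mono (ka + 1) k0 ltac:(lia) ltac:(lia)). lia.
        - destruct (Nat.lt_ge_cases ka (k0 + B)); auto.
          pose proof (Q_mono (k0 + B) ka ltac:(lia) ltac:(lia)). lia. }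
      rewrite (sum_map_single _ _ ka); [apply Hp; auto|apply seq_NoDup|apply in_seq; lia|].
      intros k Hk Hne. apply Hzero; auto. intros Hin. apply Hne.
      apply in_seq in Hk. apply (block_unique k ka (a + s)); auto; lia.
Qed.

End Cocycle.

End BlockSequences.

Lemma max_block_len_budget (Q : nat -> nat) (D n : nat) : block_scales Q -> 1 <= D ->
  D * max_block_len Q (2 * D) <= n -> 2 * D <= n ->
  Nat.max (max_block_len Q (2 * D)) (n / Q (2 * D) + 1) <= n / D.
Proof.
  intros [Q_pos Q_growth] HD Hmax Hn.
  pose proof (Q_ge_index Q Q_pos Q_growth (2 * D) ltac:(lia)).
  assert (n / Q (2 * D) <= n / (2 * D)) by (apply Nat.div_le_compat_l; lia).
  pose proof (Nat.Div0.mul_div_le n (2 * D)).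
  apply Nat.max_lub; apply Nat.div_le_lower_bound; nia.
Qed.

End Blocks.

Section ScalesOfP.
Open Scope nat_scope.

Lemma q_skip (q : nat -> nat) : 2 <= q 1 -> (forall k, 1 <= k -> q k < q (k + 1)) ->
  (forall k, 1 <= k -> q k ^ 4 + 3 * q k < q (k + 1)) ->
  forall m, 1 <= m -> 2 <= q m /\ 3 * q m + 4 <= q (m + 1).
Proof.
  intros Hq1 Hincr Hgrow m Hm.
  assert (Hge2 : 2 <= q m).
  { induction Hm as [|m Hm IH]; auto. specialize (Hincr m Hm). rewrite Nat.add_1_r in Hincr. lia. }
  split; auto. specialize (Hgrow m Hm).
  assert (q m ^ 4 >= 4) by (replace (q m ^ 4) with (q m * q m * q m * q m) by (simpl; lia); nia).
  lia.
Qed.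

Lemma qi_block_scales (q : nat -> nat) (i : nat) : 2 <= q 1 ->
  (forall k, 1 <= k -> q k < q (k + 1)) ->
  (forall k, 1 <= k -> q k ^ 4 + 3 * q k < q (k + 1)) -> block_scales (qi q i).
Proof.
  intros Hq1 Hincr Hgrow. pose proof (q_skip q Hq1 Hincr Hgrow) as Hs.
  assert (Hstep : forall m, 1 <= m -> 2 <= q m /\ 3 * q m + 4 <= q (m + 1 + 1)).
  { intros m Hm. destruct (Hs m Hm). destruct (Hs (m + 1) ltac:(lia)). lia. }
  split; intros k Hk; destruct (Hstep (2 * k) ltac:(lia)), (Hstep (2 * k + 1) ltac:(lia));
    destruct i as [|[|[|i]]]; unfold qi; cbv beta iota;
    replace (2 * (k + 1)) with (2 * k + 1 + 1) by lia; lia.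
Qed.

End ScalesOfP.

(** * Coding points and states *)

Section PointCodes.
Open Scope nat_scope.

(* [yl] codes the first coordinate on [0, n + M), [zl] codes the second one on
   [-(B + M), B + M] (letter [c] stored as [c + 1]), and [B] bounds the cocycle up
   to time [n], so that the first [n] iterates only look at these coordinates. *)
Definition coded_by (n M B : nat) (x : Pt) (yl zl : list nat) : Prop :=
  (forall k, k < n + M -> fst x k = decode yl k) /\
  (forall m : Z, (Z.abs m <= Z.of_nat (B + M))%Z ->
     snd x m = (Z.of_nat (nth (Z.to_nat (m + Z.of_nat (B + M))) zl 0%nat) - 1)%Z) /\
  (forall j, j <= n -> (Z.abs (cocycle (fst x) j) <= Z.of_nat B)%Z).

Lemma coded_by_iter_close (n M B j : nat) (x x' : Pt) (yl zl : list nat) :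
  coded_by n M B x yl zl -> coded_by n M B x' yl zl -> j < n ->
  (dPt (Nat.iter j Tmap x) (Nat.iter j Tmap x') <= (/ 3) ^ S M)%R.
Proof.
  intros [Hy [Hz Hc]] [Hy' [Hz' _]] Hj. apply Rmax_lub.
  - apply dN_le_agree. intros k Hk. rewrite !iter_Tmap_fst, Hy, Hy' by lia. reflexivity.
  - apply dZ_le_agree. intros m Hm. rewrite !iter_Tmap_snd.
    assert (Hcj : cocycle (fst x) j = cocycle (fst x') j)
      by (apply cocycle_ext; intros; rewrite Hy, Hy' by lia; reflexivity).
    specialize (Hc j ltac:(lia)). rewrite <- Hcj, Hz, Hz' by lia. reflexivity.
Qed.

Lemma sym_code (a : Z) : sym a -> (Z.of_nat (Z.to_nat (a + 1)) - 1)%Z = a /\ Z.to_nat (a + 1) < 3.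
Proof. intros [ -> | [ -> | -> ] ]; simpl; lia. Qed.

Lemma snd_code (x : Pt) (R : nat) : (forall m, sym (snd x m)) ->
  exists zl, length zl = 2 * R + 1 /\ (forall c, In c zl -> c < 3) /\
    forall m : Z, (Z.abs m <= Z.of_nat R)%Z ->
      snd x m = (Z.of_nat (nth (Z.to_nat (m + Z.of_nat R)) zl 0%nat) - 1)%Z.
Proof.
  intros Hsym. set (f := fun t : nat => Z.to_nat (snd x (Z.of_nat t - Z.of_nat R)%Z + 1)%Z).
  exists (map f (seq 0 (2 * R + 1))). split; [|split].
  - rewrite length_map, length_seq. reflexivity.
  - intros c Hc. apply in_map_iff in Hc as [t [<- _]]. apply sym_code, Hsym.
  - intros m Hm. rewrite nth_indep with (d' := f 0) by (rewrite length_map, length_seq; lia).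
    rewrite map_nth, seq_nth by lia. unfold f.
    replace (Z.of_nat (0 + Z.to_nat (m + Z.of_nat R)) - Z.of_nat R)%Z with m by lia.
    symmetry. apply sym_code, Hsym.
Qed.

Lemma point_code (Q : nat -> nat) (x : Pt) (n M K B : nat) :
  block_scales Q -> (forall m, sym (snd x m)) ->
  (exists y m, block_seq Q y /\ forall k, k < n + M -> fst x k = y (k + m)) ->
  1 <= n + M -> 1 <= K -> Nat.max (max_block_len Q K) (n / Q K + 1) <= B ->
  exists yl zl, length yl = 5 * (Nat.log2 (n + M) + 2) /\ (forall c, In c yl -> c < S (n + M)) /\
    length zl = 2 * (B + M) + 1 /\ (forall c, In c zl -> c < 3) /\ coded_by n M B x yl zl.
Proof.
  intros [Q_pos Q_growth] Hsym [y [m [Hy Hxy]]] HN HK HB.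
  destruct (window_code Q Q_pos Q_growth y Hy (m + 1) (n + M) ltac:(lia) HN)
    as [yl [Hlen [Hle Hdec]]].
  destruct (snd_code x (B + M) Hsym) as [zl [Hzlen [Hzle Hz]]].
  exists yl, zl. repeat split; auto.
  - intros c Hc. specialize (Hle c Hc). lia.
  - intros k Hk. rewrite Hxy, <- Hdec by lia. unfold yat. f_equal. lia.
  - intros j Hj. rewrite (cocycle_shift _ y m j) by (intros; apply Hxy; lia).
    pose proof (cocycle_increment_le Q Q_pos Q_growth y Hy K n m j HK Hj). lia.
Qed.

Lemma Xi_windows (q : nat -> nat) (i : nat) (x : Pt) : Xi q i x ->
  (forall m, sym (snd x m)) /\
  forall N, exists y m, block_seq (qi q i) y /\ forall k, k < N -> fst x k = y (k + m).
Proof.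
  intros [[_ Hsym] Hclose]. split; auto. intros N.
  destruct (Hclose ((/ 3) ^ N)%R (third_pow_pos N)) as [p [m [[_ Hp] [_ Hd]]]].
  exists (fst p), m. split; [exact Hp|]. intros k Hk. rewrite <- iter_Tmap_fst.
  apply (dN_lt_agree _ _ N); auto. eapply Rle_lt_trans; [apply Rmax_l|exact Hd].
Qed.

End PointCodes.

Section Pigeonhole.
Open Scope nat_scope.

Fixpoint all_lists (b A : nat) : list (list nat) :=
  match A with
  | O => [[]]
  | S A' => flat_map (fun l => map (fun c => c :: l) (seq 0 b)) (all_lists b A')
  end.

Lemma all_lists_length (b A : nat) : length (all_lists b A) = b ^ A.
Proof.
  induction A as [|A IH]; simpl; auto.
  rewrite (flat_map_constant_length (c := b)), IH; [lia|].
  intros l _. rewrite length_map, length_seq. reflexivity.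
Qed.

Lemma in_all_lists (b A : nat) (l : list nat) :
  length l = A -> (forall c, In c l -> c < b) -> In l (all_lists b A).
Proof.
  revert l. induction A as [|A IH]; intros l Hl Hb.
  - destruct l; [now left|discriminate].
  - destruct l as [|c l]; [discriminate|]. simpl. apply in_flat_map.
    exists l. split; [apply IH; auto; intros; apply Hb; now right|].
    apply (in_map (fun c' => c' :: l)), in_seq. specialize (Hb c (or_introl eq_refl)). lia.
Qed.

Lemma Forall2_in_r {S C : Type} (R : S -> C -> Prop) (E : list S) (L : list C) (c : C) :
  Forall2 R E L -> In c L -> exists x, In x E /\ R x c.
Proof.
  intros HEL. induction HEL as [|x c' E L Hxc HEL IH]; intros Hc; [destruct Hc|].
  destruct Hc as [<-|Hc]; [exists x; split; auto; now left|].
  destruct (IH Hc) as [x' [Hx' Hx'c]]. exists x'. split; auto. now right.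
Qed.

Lemma Forall2_NoDup {S C : Type} (R : S -> C -> Prop) (E : list S) (L : list C) :
  Forall2 R E L -> NoDup E ->
  (forall x x' c, In x E -> In x' E -> R x c -> R x' c -> x = x') -> NoDup L.
Proof.
  intros HEL. induction HEL as [|x c E L Hxc HEL IH]; intros Hnd Hinj; constructor.
  - intros Hc. destruct (Forall2_in_r R E L c HEL Hc) as [x' [Hx' Hx'c]].
    inversion Hnd as [|? ? Hx]; subst. apply Hx.
    rewrite (Hinj x x' c); auto; [now left|now right].
  - inversion Hnd; subst. apply IH; auto. intros; eapply Hinj; eauto; now right.
Qed.

Lemma pigeonhole {S C : Type} (E : list S) (codes : list C) (R : S -> C -> Prop) :
  NoDup E -> (forall x, In x E -> exists c, In c codes /\ R x c) ->
  (forall x x' c, In x E -> In x' E -> R x c -> R x' c -> x = x') ->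
  length E <= length codes.
Proof.
  intros Hnd Hex Hinj.
  destruct (Forall_Exists_exists_Forall2 R (l1 := E) (l2 := codes)) as [L [HEL Hincl]].
  { apply Forall_forall. intros x Hx. destruct (Hex x Hx) as [c [Hc Hxc]].
    apply Exists_exists. eauto. }
  rewrite (Forall2_length HEL). apply NoDup_incl_length; auto.
  exact (Forall2_NoDup R E L HEL Hnd Hinj).
Qed.

Lemma separated_set_length_le {S C : Type} (X : S -> Prop) (d : S -> S -> R) (T : S -> S)
    (n : nat) (eps : R) (codes : list C) (coded : S -> C -> Prop) (E : list S) :
  (forall s, X s -> exists c, In c codes /\ coded s c) ->
  (forall s s' c, coded s c -> coded s' c -> ~ separated d T n eps s s') ->
  separated_set X d T n eps E -> length E <= length codes.
Proof.
  intros Hcode Hclose [Hnd [HX Hsep]]. apply (pigeonhole E codes coded Hnd).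
  - intros s Hs. apply Hcode, HX, Hs.
  - intros s s' c Hs Hs' Hc Hc'. apply NNPP. intros Hne.
    exact (Hclose s s' c Hc Hc' (Hsep s s' Hs Hs' Hne)).
Qed.

End Pigeonhole.

Section CodeSpaces.
Open Scope nat_scope.

Local Notation pcode := (list nat * list nat)%type.

Definition point_codes (N Ly Lz : nat) : list pcode :=
  list_prod (all_lists (S N) Ly) (all_lists 3 Lz).

Definition state_codes (N Ly Lz : nat) :=
  list_prod (seq 0 4) (list_prod (list_prod (point_codes N Ly Lz) (point_codes N Ly Lz))
                                 (list_prod (point_codes N Ly Lz) (point_codes N Ly Lz))).

Lemma state_codes_length (N Ly Lz : nat) :
  length (state_codes N Ly Lz) = 4 * (S N ^ Ly * 3 ^ Lz) ^ 4.
Proof.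
  unfold state_codes, point_codes. rewrite !length_prod, length_seq, !all_lists_length.
  simpl. lia.
Qed.

Definition state_coded_by (n M B : nat) (s : St)
    (c : nat * ((pcode * pcode) * (pcode * pcode))) : Prop :=
  match s, c with
  | (p0, p1, p2, p3, i), (i', ((c0, c1), (c2, c3))) =>
      i = i' /\ coded_by n M B p0 (fst c0) (snd c0) /\ coded_by n M B p1 (fst c1) (snd c1) /\
      coded_by n M B p2 (fst c2) (snd c2) /\ coded_by n M B p3 (fst c3) (snd c3)
  end.

Lemma state_coded_not_separated (n M B : nat) (eps : R) (s s' : St) c :
  ((/ 3) ^ S M <= eps)%R -> state_coded_by n M B s c -> state_coded_by n M B s' c ->
  ~ separated dSt That n eps s s'.
Proof.
  intros HM Hs Hs' [j [Hj Hd]].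
  destruct s as [[[[p0 p1] p2] p3] i], s' as [[[[p0' p1'] p2'] p3'] i'].
  destruct c as [ic [[c0 c1] [c2 c3]]].
  destruct Hs as [-> [H0 [H1 [H2 H3]]]], Hs' as [-> [H0' [H1' [H2' H3']]]].
  rewrite !iter_That in Hd. unfold dSt in Hd. rewrite Nat.eqb_refl in Hd.
  pose proof (coded_by_iter_close n M B j p0 p0' _ _ H0 H0' Hj).
  pose proof (coded_by_iter_close n M B j p1 p1' _ _ H1 H1' Hj).
  pose proof (coded_by_iter_close n M B j p2 p2' _ _ H2 H2' Hj).
  pose proof (coded_by_iter_close n M B j p3 p3' _ _ H3 H3' Hj).
  pose proof (third_pow_pos (S M)).
  apply Rlt_not_le in Hd. apply Hd.
  apply Rmax_lub; [apply Rmax_lub; apply Rmax_lub|]; lra.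
Qed.

End CodeSpaces.

Section CodingXset.
Open Scope nat_scope.

Variables (q : nat -> nat) (n M K B : nat).
Hypothesis q_scales : forall i, i < 4 -> block_scales (qi q i).
Hypothesis nM_pos : 1 <= n + M.
Hypothesis K_pos : 1 <= K.
Hypothesis B_budget :
  forall i, i < 4 -> Nat.max (max_block_len (qi q i) K) (n / qi q i K + 1) <= B.

Local Notation Ly := (5 * (Nat.log2 (n + M) + 2)).
Local Notation Lz := (2 * (B + M) + 1).

Lemma Xi_point_code (i : nat) (x : Pt) : i < 4 -> Xi q i x ->
  exists c, In c (point_codes (n + M) Ly Lz) /\ coded_by n M B x (fst c) (snd c).
Proof.
  intros Hi Hx. destruct (Xi_windows q i x Hx) as [Hsym Hwin].
  destruct (point_code (qi q i) x n M K B (q_scales i Hi) Hsym (Hwin (n + M)) nM_pos K_pos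
              (B_budget i Hi)) as [yl [zl [Hyl [Hyb [Hzl [Hzb Hc]]]]]].
  exists (yl, zl). split; auto. apply in_prod; apply in_all_lists; auto.
Qed.

Lemma Xset_coded (s : St) : Xset q s ->
  exists c, In c (state_codes (n + M) Ly Lz) /\ state_coded_by n M B s c.
Proof.
  destruct s as [[[[p0 p1] p2] p3] i]. intros [X0 [X1 [X2 [X3 Hi]]]].
  destruct (Xi_point_code 0 p0 ltac:(lia) X0) as [c0 [Hc0 H0]].
  destruct (Xi_point_code 1 p1 ltac:(lia) X1) as [c1 [Hc1 H1]].
  destruct (Xi_point_code 2 p2 ltac:(lia) X2) as [c2 [Hc2 H2]].
  destruct (Xi_point_code 3 p3 ltac:(lia) X3) as [c3 [Hc3 H3]].
  exists (i, ((c0, c1), (c2, c3))). split; [|simpl; tauto].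
  unfold state_codes. repeat apply in_prod; auto. apply in_seq. lia.
Qed.

End CodingXset.

(** * Growth of the number of codes *)

Lemma nat_above (r : R) : exists n : nat, r <= INR n.
Proof.
  destruct (archimed r) as [Hup _]. exists (Z.to_nat (up r)).
  destruct (Z.le_gt_cases 0 (up r)).
  - rewrite INR_IZR_INZ, Z2Nat.id by lia. lra.
  - assert (IZR (up r) <= 0) by (apply IZR_le; lia). pose proof (pos_INR (Z.to_nat (up r))). lra.
Qed.

Lemma scale_above (delta : R) : 0 < delta -> exists D : nat, (1 <= D)%nat /\ 36 <= INR D * delta.
Proof.
  intros Hdelta. destruct (nat_above (36 / delta)) as [D HD]. exists (S D). split; [lia|].
  rewrite S_INR. assert (36 / delta * delta = 36) by (field; lra). nra.
Qed.

Lemma third_pow_le_inv (M : nat) : (/ 3) ^ M <= / (INR M + 1).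
Proof.
  induction M as [|M IH]; [simpl; lra|].
  rewrite S_INR. simpl. pose proof (pos_INR M).
  apply Rle_trans with (/ 3 * / (INR M + 1)); [apply Rmult_le_compat_l; lra|].
  rewrite <- Rinv_mult. apply Rinv_le_contravar; nra.
Qed.

Lemma third_pow_le_eps (eps : R) : 0 < eps -> exists M : nat, (/ 3) ^ S M <= eps.
Proof.
  intros Heps. destruct (nat_above (/ eps)) as [M HM]. exists M.
  pose proof (third_pow_le_inv M).
  pose proof (third_pow_antitone (S M) M ltac:(lia)).
  assert (/ (INR M + 1) <= eps).
  { rewrite <- (Rinv_inv eps). apply Rinv_le_contravar; [apply Rinv_0_lt_compat|]; lra. }
  lra.
Qed.

Lemma exp_le_mono (x y : R) : x <= y -> exp x <= exp y.
Proof. intros [H| ->]; [left; apply exp_increasing|]; lra. Qed.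

Lemma ln_le_mono (x y : R) : 0 < x -> x <= y -> ln x <= ln y.
Proof. intros H [H1| ->]; [left; apply ln_increasing|]; lra. Qed.

Lemma ln_4_le_2 : ln 4 <= 2.
Proof.
  assert (4 <= exp 2).
  { replace 2 with (1 + 1) by lra. rewrite exp_plus. pose proof (exp_ineq1 1 ltac:(lra)). nra. }
  rewrite <- (ln_exp 2). apply ln_le_mono; lra.
Qed.

(* [l^3 <= 27 X] comes from [exp (l / 3) >= l / 3] with [l = ln X]. *)
Lemma ln_sq_le (eps X : R) : 0 < eps -> exp (27 / eps) <= X -> ln X ^ 2 <= eps * X.
Proof.
  intros He HX. assert (HX0 : 0 < X) by (pose proof (exp_pos (27 / eps)); lra).
  set (l := ln X).
  assert (Hl : 27 / eps <= l).
  { unfold l. rewrite <- (ln_exp (27 / eps)). apply ln_le_mono; auto. apply exp_pos. }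
  assert (Hlpos : 0 < l) by (assert (0 < 27 / eps) by (apply Rdiv_lt_0_compat; lra); lra).
  assert (Hcube : l ^ 3 <= 27 * X).
  { assert (HXe : X = exp (l / 3) * exp (l / 3) * exp (l / 3)).
    { unfold l. rewrite <- !exp_plus.
      replace (ln X / 3 + ln X / 3 + ln X / 3) with (ln X) by lra. rewrite exp_ln; auto. }
    pose proof (exp_ineq1 (l / 3) ltac:(lra)).
    assert ((l / 3) * (l / 3) <= exp (l / 3) * exp (l / 3)) by (apply Rmult_le_compat; lra).
    assert ((l / 3) * (l / 3) * (l / 3) <= exp (l / 3) * exp (l / 3) * exp (l / 3))
      by (apply Rmult_le_compat; nra).
    rewrite HXe. simpl. nra. }
  assert (eps * l >= 27).
  { apply Rle_ge. apply (Rmult_le_reg_r (/ eps)); [apply Rinv_0_lt_compat; auto|].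
    replace (eps * l * / eps) with l by (field; lra). lra. }
  simpl in *. nra.
Qed.

Lemma log2_le_ln (N : nat) : (1 <= N)%nat -> INR (Nat.log2 N) <= 2 * ln (INR N + 1).
Proof.
  intros HN. pose proof (Nat.log2_spec N ltac:(lia)) as [Hlow _].
  apply le_INR in Hlow. rewrite pow_INR in Hlow. replace (INR 2) with 2 in Hlow by reflexivity.
  assert (ln (2 ^ Nat.log2 N) <= ln (INR N + 1)) by (apply ln_le_mono; [apply pow_lt|]; lra).
  rewrite ln_pow in H by lra. pose proof ln_lt_2. pose proof (pos_INR (Nat.log2 N)). nra.
Qed.

(* The logarithm of the number of codes is [O (log^2 n) + 8 ln 3 n / D + O (1)]. *)
Lemma code_count_subexponential (delta : R) (M D : nat) : 0 < delta -> 36 <= INR D * delta ->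
  exists N0 : nat, forall n : nat, (N0 <= n)%nat ->
    INR (4 * (S (n + M) ^ (5 * (Nat.log2 (n + M) + 2)) * 3 ^ (2 * (n / D + M) + 1)) ^ 4)
      <= exp (delta * INR n).
Proof.
  intros Hdelta HD. set (eps := delta / 640). set (C := 50 + 16 * INR M).
  destruct (nat_above (exp (27 / eps))) as [n1 Hn1].
  destruct (nat_above (4 * C / delta)) as [n2 Hn2].
  exists (Nat.max (M + 1) (Nat.max n1 n2)). intros n Hn.
  set (N := (n + M)%nat). set (Ly := (5 * (Nat.log2 N + 2))%nat).
  set (Lz := (2 * (n / D + M) + 1)%nat). set (X := INR (S N)).
  assert (HX : X = INR n + INR M + 1) by (unfold X, N; rewrite S_INR, plus_INR; lra).
  assert (Hcount : INR (4 * (S N ^ Ly * 3 ^ Lz) ^ 4) = 4 * (X ^ Ly * 3 ^ Lz) ^ 4).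
  { rewrite !mult_INR, !pow_INR, mult_INR, !pow_INR.
    replace (INR 4) with 4 by (simpl; lra). replace (INR 3) with 3 by (simpl; lra).
    reflexivity. }
  assert (HX1 : 1 <= X) by (pose proof (pos_INR n); pose proof (pos_INR M); lra).
  assert (Hpos : 0 < 4 * (X ^ Ly * 3 ^ Lz) ^ 4)
    by (apply Rmult_lt_0_compat; [lra|apply pow_lt, Rmult_lt_0_compat; apply pow_lt; lra]).
  rewrite Hcount, <- (exp_ln _ Hpos). apply exp_le_mono.
  rewrite ln_mult, ln_pow, ln_mult, !ln_pow
    by (repeat (apply Rmult_lt_0_compat || apply pow_lt); lra).
  set (l := ln X).
  assert (Hl0 : 0 <= l) by (unfold l; rewrite <- ln_1; apply ln_le_mono; lra).
  assert (Hlog : INR (Nat.log2 N) <= 2 * l)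
    by (unfold l, X; rewrite S_INR; apply log2_le_ln; unfold N; lia).
  assert (Hsq : l ^ 2 <= eps * X).
  { apply ln_sq_le; [unfold eps; lra|]. rewrite HX. pose proof (pos_INR M).
    assert (INR n1 <= INR n) by (apply le_INR; lia). lra. }
  assert (HnM : INR M + 1 <= INR n)
    by (rewrite <- S_INR; apply le_INR; lia).
  assert (HCn : C <= delta * INR n / 4).
  { assert (INR n2 <= INR n) by (apply le_INR; lia).
    assert (4 * C / delta * delta = 4 * C) by (field; lra). nra. }
  assert (HnD : INR (n / D) * INR D <= INR n)
    by (rewrite <- mult_INR; apply le_INR; rewrite Nat.mul_comm; apply Nat.Div0.mul_div_le).
  assert (Hln3 : 0 <= ln 3 <= 2).
  { split; [rewrite <- ln_1; apply ln_le_mono; lra|].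
    pose proof ln_4_le_2. assert (ln 3 <= ln 4) by (apply ln_le_mono; lra). lra. }
  pose proof ln_4_le_2. pose proof (pos_INR (n / D)).
  assert (HLy : INR Ly = 5 * (INR (Nat.log2 N) + 2))
    by (unfold Ly; rewrite mult_INR, plus_INR; simpl; lra).
  assert (HLz : INR Lz = 2 * (INR (n / D) + INR M) + 1)
    by (unfold Lz; rewrite plus_INR, mult_INR, plus_INR; simpl; lra).
  rewrite HLy, HLz. replace (INR 4) with 4 by (simpl; lra). unfold C, eps in *.
  assert (Hquad : 4 * (5 * (INR (Nat.log2 N) + 2)) * l <= 80 * l ^ 2 + 40).
  { assert (INR (Nat.log2 N) * l <= 2 * l * l) by (apply Rmult_le_compat_r; lra).
    pose proof (pow2_ge_0 (l - 1)). simpl. nra. }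
  assert (Hlin : 4 * ((2 * (INR (n / D) + INR M) + 1) * ln 3)
                 <= 16 * INR (n / D) + 16 * INR M + 8).
  { pose proof (pos_INR M).
    assert ((2 * (INR (n / D) + INR M) + 1) * ln 3 <= (2 * (INR (n / D) + INR M) + 1) * 2)
      by (apply Rmult_le_compat_l; lra).
    lra. }
  assert (Hsq' : 80 * l ^ 2 <= delta * INR n / 4) by (rewrite HX in Hsq; nra).
  assert (HnD' : 16 * INR (n / D) <= delta * INR n / 2) by nra.
  nra.
Qed.

Theorem mainTheorem9 (tau : nat -> R) (q : nat -> nat)
  (Htau_pos : forall n : nat, 0 < tau n)
  (Htau_mono : forall m n : nat, (m <= n)%nat -> tau n <= tau m)
  (Htau_lim : Un_cv tau 0)
  (Hq1 : (2 <= q 1%nat)%nat)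
  (Hq_incr : forall k : nat, (1 <= k)%nat -> (q k < q (k + 1))%nat)
  (Hq_i : forall k : nat, (1 <= k)%nat ->
            (q k ^ 4 + 3 * q k < q (k + 1))%nat)
  (Hq_ii : forall k : nat, (1 <= k)%nat ->
            tau ((q (k + 1) + 2) / 3)%nat < / (16 * INR (q k))) :
  zero_topological_entropy (Xset q) dSt That.
Proof.
  intros eps delta Heps Hdelta.
  assert (Hscales : forall i, (i < 4)%nat -> block_scales (qi q i))
    by (intros; apply qi_block_scales; auto).
  destruct (third_pow_le_eps eps Heps) as [M HM].
  destruct (scale_above delta Hdelta) as [D [HD1 HD]].
  destruct (code_count_subexponential delta M D Hdelta HD) as [N0 HN0].
  set (K := (2 * D)%nat).
  set (Lmax := (max_block_len (qi q 0) K + max_block_len (qi q 1) K +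
                max_block_len (qi q 2) K + max_block_len (qi q 3) K)%nat).
  exists (Nat.max N0 (Nat.max (D * Lmax) K)). intros n Hn E HE.
  assert (Hbudget : forall i, (i < 4)%nat ->
            (Nat.max (max_block_len (qi q i) K) (n / qi q i K + 1) <= n / D)%nat).
  { intros i Hi. apply max_block_len_budget; auto; [|unfold K in Hn; lia].
    assert (max_block_len (qi q i) K <= Lmax)%nat
      by (unfold Lmax; destruct i as [|[|[|[|]]]]; lia).
    fold K. nia. }
  set (codes := state_codes (n + M) (5 * (Nat.log2 (n + M) + 2)) (2 * (n / D + M) + 1)).
  apply Rle_trans with (INR (length codes)).
  - apply le_INR, (separated_set_length_le (Xset q) dSt That n eps codes
                                            (state_coded_by n M (n / D)) E);
      auto.
    + intros s Hs. apply (Xset_coded q n M K (n / D)); auto; unfold K in *; lia.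
    + intros s s' c. apply state_coded_not_separated, HM.
  - unfold codes. rewrite state_codes_length. apply HN0. lia.
Qed.
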